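(* Let $N\ge1$ and let $x=(x_1,\dots,x_{2N})\in(\mathbb{R}_{>0})^{2N}$ satisfy the highest weight condition. Then Algorithm I and Algorithm II, both started from $x^{(1)}=x$, stop after the same number $u$ of steps and produce the same sequence of pairs $(\mu^{(i)},\nu^{(i)})_{1\le i\le u}$.
   Context: Highest weight condition: a sequence $x_1,\dots,x_{2n}$ of nonnegative reals satisfies it if $\sum_{i=1}^k(x_{2i-1}-x_{2i})\ge0$ for all $1\le k\le n$. Algorithm I. Set $N^{(1)}=N$, $x^{(1)}=x$. Given $x^{(i)}=(x^{(i)}_1,\dots,x^{(i)}_{2N^{(i)}})$ of positive reals satisfying the highest weight condition: let $\mu^{(i)}=\min_j x^{(i)}_j$ and $y^{(i)}_j=x^{(i)}_j-\mu^{(i)}$. In the (linear, non-cyclic) array $y^{(i)}_1,\dots,y^{(i)}_{2N^{(i)}}$ consider the maximal runs of consecutive zeros (a lone zero counts as a run); say there are $k^{(i)}$ runs with lengths $n^{(i)}_1,\dots,n^{(i)}_{k^{(i)}}$. Let $N^{(i+1)}=N^{(i)}-\sum_{j}\lceil n^{(i)}_j/2\rceil$ and $\nu^{(i)}=N^{(i)}-N^{(i+1)}$. If $N^{(i+1)}=0$, stop and set $u=i$. Otherwise form $x^{(i+1)}$ from $y^{(i)}$: (a) if a run of zeros is at the left end, delete it; (b) for every run of zeros lying between positive entries $a,b$, delete the zeros if the run length is even, and if odd delete the zeros and also replace $a,b$ by the single entry $a+b$; (c) if a run of zeros is at the right end, preceded by a positive entry $a$, delete the zeros, and if its length is odd also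 delete $a$ and add $a$ to the first entry of the resulting array. Repeat with $x^{(i+1)}$. Algorithm II is identical to Algorithm I except that step (c) is replaced by: (c') if a run of zeros is at the right end, preceded by a positive entry $a$, delete the zeros, and if its length is odd also delete $a$ (without adding it anywhere). *)

(* the statement is over an arbitrary real field R
   (in particular it covers the real numbers). *)
From HB Require Import structures.
From mathcomp Require Import all_boot all_order all_algebra.
Set Implicit Arguments. Unset Strict Implicit. Unset Printing Implicit Defensive.
Import Order.TTheory GRing.Theory Num.Theory.
Local Open Scope ring_scope.

Section Alg.
Variable R : realFieldType.

(* highest weight condition for x_1..x_{2n} (0-indexed here):
   for all 1 <= k <= n, sum_{i<k} (x_{2i} - x_{2i+1}) >= 0 *)
Definition highest_weight (x : seq R) : Prop :=
  forall k : nat, (1 <= k <= (size x)./2)%N ->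
    0 <= \sum_(i < k) (x`_(2 * i) - x`_(2 * i).+1).

Definition seqmin (x : seq R) : R := foldr Num.min (head 0 x) x.

(* decomposition of an array into positive entries (inl a) and maximal
   runs of zeros (inr n, n = length of the run) *)
Fixpoint group_runs (y : seq R) : seq (R + nat) :=
  match y with
  | [::] => [::]
  | a :: t =>
      let g := group_runs t in
      if a == 0 then
        match g with
        | inr n :: g' => inr n.+1 :: g'
        | _ => inr 1%N :: g
        end
      else inl a :: g
  end.

Definition zero_runs (g : seq (R + nat)) : seq nat :=
  pmap (fun t => match t with inr n => Some n | inl _ => None end) g.

Definition run_nu (g : seq (R + nat)) : nat :=
  sumn [seq uphalf n | n <- zero_runs g].

(* step (b): scanning from a positive entry acc; interior odd runs merge
   neighbours, even runs are just deleted. Returns the resulting array and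
   the length of the trailing run of zeros (if any). *)
Fixpoint merge_runs (acc : R) (g : seq (R + nat)) : seq R * option nat :=
  match g with
  | [::] => ([:: acc], None)
  | [:: inr n] => ([:: acc], Some n)
  | inr n :: inl b :: g' =>
      if odd n then merge_runs (acc + b) g'
      else let (s, t) := merge_runs b g' in (acc :: s, t)
  | inr _ :: inr _ :: _ => ([:: acc], None) (* cannot occur after grouping *)
  | inl b :: g' => let (s, t) := merge_runs b g' in (acc :: s, t)
  end.

(* form x^{(i+1)} from y^{(i)}; addback = true for Algorithm I (step (c)),
   false for Algorithm II (step (c')) *)
Definition next_array (addback : bool) (y : seq R) : seq R :=
  let g := group_runs y in
  let g1 := match g with inr _ :: g' => g' | _ => g end in
  match g1 with
  | inl a :: rest =>
      let (s, t) := merge_runs a rest in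
      match t with
      | Some n =>
          if odd n then
            let s0 := belast (head 0 s) (behead s) in
            let l := last 0 s in
            if addback then
              match s0 with
              | h :: s' => (h + l) :: s'
              | [::] => [::]
              end
            else s0
          else s
      | None => s
      end
  | _ => [::]
  end.

(* alg_run addback N x L : starting from N^{(i)} = N, x^{(i)} = x, the
   algorithm stops, and L is the sequence of pairs (mu^{(j)}, nu^{(j)})
   for j = i, ..., u. *)
Inductive alg_run (addback : bool) : nat -> seq R -> seq (R * nat) -> Prop :=
  | alg_stop N x :
      let mu := seqmin x in
      let y := [seq a - mu | a <- x] in
      let nu := run_nu (group_runs y) in
      (N - nu)%N = 0%N ->
      alg_run addback N x [:: (mu, nu)]
  | alg_continue N x L :
      let mu := seqmin x in
      let y := [seq a - mu | a <- x] in
      let nu := run_nu (group_runs y) in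
      (N - nu)%N <> 0%N ->
      alg_run addback (N - nu)%N (next_array addback y) L ->
      alg_run addback N x ((mu, nu) :: L).

End Alg.

Definition algorithm_I_run (R : realFieldType) := @alg_run R true.
Definition algorithm_II_run (R : realFieldType) := @alg_run R false.

From HB Require Import structures.
From mathcomp Require Import all_boot all_order all_algebra.
From mathcomp Require Import zify ring.
Set Implicit Arguments. Unset Strict Implicit. Unset Printing Implicit Defensive.
Import Order.TTheory GRing.Theory Num.Theory.
Local Open Scope ring_scope.

(* The algorithms differ only in step (c): when the trailing run of zeros is
   odd, Algorithm I adds the deleted last entry to the first entry.  We run
   both algorithms side by side and show by induction on N the invariant
   that the current array of Algorithm I is that of Algorithm II with some
   d >= 0 added to its first entry ([algorithms_agree]).  Such a
   perturbation changes neither mu nor nu, and the next arrays are again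
   related in the same way ([round_add_head]).  Two facts from the highest
   weight condition make this work: x_1 >= x_2, so raising x_1 keeps the
   minimum; and a leading run of zeros in y has even length, so filling its
   first zero with d > 0 turns it into an odd interior run between d and the
   next entry, which are merged, with the same contribution to nu.

   The highest weight condition is carried through Algorithm II in the form
   "alternating partial sums are nonnegative" ([alt_nonneg]). *)

Lemma seq_pair_ind (T : Type) (P : seq T -> Prop) :
  P [::] -> (forall a, P [:: a]) -> (forall a b s, P s -> P [:: a, b & s]) ->
  forall s, P s.
Proof.
move=> P0 P1 P2 s; suff [] : P s /\ forall a, P (a :: s) by [].
by elim: s => [|b s [Ps Pbs]]; split=> // a; apply: P2.
Qed.

Section AlternatingSums.
Variable R : realFieldType.
Implicit Types (B : R) (s : seq R).

(* For nonnegative entries and B = 0 this is the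
   highest weight condition; it is the invariant of Algorithm II. *)
Fixpoint alt_nonneg B (plus : bool) s : Prop :=
  if s is a :: s' then
    let B' := if plus then B + a else B - a in 0 <= B' /\ alt_nonneg B' (~~ plus) s'
  else True.

Fixpoint pair_nonneg B s : Prop :=
  if s is a :: b :: s' then 0 <= B + a - b /\ pair_nonneg (B + a - b) s' else True.

Lemma alt_nonneg_catl B plus s1 s2 :
  alt_nonneg B plus (s1 ++ s2) -> alt_nonneg B plus s1.
Proof. by elim: s1 B plus => //= a s IH B plus [? /IH]. Qed.

Lemma alt_nonneg_zeros B plus n s : 0 <= B ->
  alt_nonneg B plus (nseq n 0 ++ s) <-> alt_nonneg B (odd n (+) plus) s.
Proof.
move=> B_ge0; elim: n plus => [|n IH] plus //=.
have -> : (if plus then B + 0 else B - 0) = B by case: plus; rewrite ?addr0 ?subr0.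
by rewrite IH addbN -addNb; split=> [[]|].
Qed.

Lemma highest_weight_pair_nonneg B s :
  (forall k, (1 <= k <= (size s)./2)%N ->
     0 <= B + \sum_(i < k) (s`_(2 * i) - s`_(2 * i).+1)) ->
  pair_nonneg B s.
Proof.
elim/seq_pair_ind: s B => // a b s IH B /= hw.
have hab : 0 <= B + a - b by have := hw 1%N; rewrite big_ord1 /= addrA; apply.
split=> //; apply: IH => k /andP[_ k_le]; have := hw k.+1; rewrite !ltnS k_le big_ord_recl.
have -> : \sum_(i < k) ([:: a, b & s]`_(2 * lift ord0 i) - [:: a, b & s]`_(2 * lift ord0 i).+1)
    = \sum_(i < k) (s`_(2 * i) - s`_(2 * i).+1).
  by apply: eq_bigr => i _; rewrite lift0 mulnS.
by rewrite !addrA; apply.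
Qed.

Lemma pair_nonneg_shift B mu s :
  pair_nonneg B [seq a - mu | a <- s] <-> pair_nonneg B s.
Proof.
elim/seq_pair_ind: s B => // a b s IH B /=.
have -> : B + (a - mu) - (b - mu) = B + a - b by ring.
by rewrite IH.
Qed.

(* For nonnegative entries the odd partial sums come for free. *)
Lemma pair_nonneg_alt B s : 0 <= B -> all (fun a => 0 <= a) s ->
  pair_nonneg B s -> alt_nonneg B true s.
Proof.
elim/seq_pair_ind: s B => [|a|a b s IH] B //= B_ge0.
  by rewrite andbT => a_ge0 _; rewrite addr_ge0.
by case/and3P=> a_ge0 _ s_ge0 [hab hs]; split; [rewrite addr_ge0 | split => //; apply: IH].
Qed.

(* Conversely, the even partial sums are among the alternating ones. *)
Lemma alt_pair_nonneg B s : alt_nonneg B true s -> pair_nonneg B s.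
Proof. by elim/seq_pair_ind: s B => // a b s IH B /= [_ [hab /IH]]. Qed.

End AlternatingSums.

Section Runs.
Variable R : realFieldType.
Implicit Types (y s : seq R) (g : seq (R + nat)).

Fixpoint flatten_runs g : seq R :=
  match g with
  | [::] => [::]
  | inl a :: g' => a :: flatten_runs g'
  | inr n :: g' => nseq n 0 ++ flatten_runs g'
  end.

Fixpoint runs_wf g : Prop :=
  match g with
  | [::] => True
  | inl a :: g' => 0 < a /\ runs_wf g'
  | inr _ :: g' => (if g' is inr _ :: _ then False else True) /\ runs_wf g'
  end.

Lemma group_runsK y : flatten_runs (group_runs y) = y.
Proof.
elim: y => //= a y IH; case: eqP => [->|_] /=; last by rewrite IH.
by move: IH; case: (group_runs y) => [|[b|m] g] /= <-.
Qed.

Lemma group_runs_wf y : all (fun a => 0 <= a) y -> runs_wf (group_runs y).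
Proof.
elim: y => //= a y IH /andP[a_ge0 /IH]; case: eqP => [_|/eqP a_neq0] /=.
  by case: (group_runs y) => [|[b|m] g].
by rewrite lt_def a_neq0 a_ge0.
Qed.

Lemma run_nu_nil : @run_nu R [::] = 0%N :> nat.
Proof. by []. Qed.

Lemma run_nu_inl a g : run_nu (inl a :: g) = run_nu g.
Proof. by []. Qed.

Lemma run_nu_inr n g : run_nu (inr n :: g) = (uphalf n + run_nu g)%N.
Proof. by []. Qed.

Lemma run_nu_gt0 y : 0 \in y -> (0 < run_nu (group_runs y))%N.
Proof.
elim: y => //= a y IH; rewrite in_cons eq_sym; case: (eqVneq a 0) => _ /=; last exact: IH.
by case: (group_runs y) => [|[b|m] g].
Qed.

(* Adding d to the first entry: the only way Algorithm I differs from II. *)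
Definition add_head (d : R) (s : seq R) : seq R :=
  if s is c :: s' then (c + d) :: s' else [::].

Lemma add_head_cons d c s : add_head d (c :: s) = (c + d) :: s.
Proof. by []. Qed.

Lemma add_head0 s : add_head 0 s = s.
Proof. by case: s => //= c s; rewrite addr0. Qed.

(* Whether step (c) deletes the last entry. *)
Definition trail_odd (t : option nat) : bool := if t is Some n then odd n else false.

Lemma merge_runs_inl acc b g :
  merge_runs acc (inl b :: g) = (acc :: (merge_runs b g).1, (merge_runs b g).2).
Proof. by rewrite /=; case: merge_runs. Qed.

Lemma merge_runs_run acc n b g : merge_runs acc (inr n :: inl b :: g) =
  if odd n then merge_runs (acc + b) g
  else (acc :: (merge_runs b g).1, (merge_runs b g).2).
Proof. by rewrite /=; case: ifP => //; case: merge_runs. Qed.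

Lemma merge_runs_ind (P : R -> seq (R + nat) -> Prop) :
  (forall acc, P acc [::]) ->
  (forall acc n, P acc [:: inr n]) ->
  (forall acc n b g, (forall acc', P acc' g) -> P acc (inr n :: inl b :: g)) ->
  (forall acc m n g, P acc (inr m :: inr n :: g)) ->
  (forall acc b g, (forall acc', P acc' g) -> P acc (inl b :: g)) ->
  forall acc g, P acc g.
Proof.
move=> Pnil Pzeros Prun Pruns Pinl acc g.
suff [] : (forall acc, P acc g) /\ forall acc z, P acc (z :: g) by [].
elim: g {acc} => [|z g [Pg Pzg]].
  by split=> // acc [b|n]; [apply: Pinl | apply: Pzeros].
split=> // acc [b|n]; first exact: Pinl.
by case: z Pzg => [b|m] Pzg; [apply: Prun | apply: Pruns].
Qed.

Lemma merge_runs_nonempty acc g : (0 < size (merge_runs acc g).1)%N.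
Proof.
move: acc g; apply: merge_runs_ind => // [acc n b g IH|acc b g _].
  by rewrite merge_runs_run; case: ifP.
by rewrite merge_runs_inl.
Qed.

(* Merged entries are sums of nonnegative entries. *)
Lemma merge_runs_nonneg acc g : runs_wf g -> 0 <= acc ->
  all (fun a => 0 <= a) (merge_runs acc g).1.
Proof.
move: acc g; apply: merge_runs_ind => [acc _|acc n _|acc n b g IH|acc m n g []//|acc b g IH].
- by rewrite /= andbT.
- by rewrite /= andbT.
- rewrite merge_runs_run => -[_ [b_gt0 wf_g]] acc_ge0; case: ifP => _.
    by apply: IH => //; rewrite addr_ge0 // ltW.
  by rewrite /= acc_ge0 IH // ltW.
- by rewrite merge_runs_inl => -[b_gt0 wf_g] /= ->; rewrite IH // ltW.
Qed.

(* Merging keeps the alternating partial sums: an odd run of zeros between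
   a and b puts a and b at positions of the same sign. *)
Lemma merge_runs_alt acc g B plus :
  alt_nonneg B plus (acc :: flatten_runs g) -> alt_nonneg B plus (merge_runs acc g).1.
Proof.
move: B plus; move: acc g; apply: merge_runs_ind => //.
- by move=> acc n B plus [].
- move=> acc n b g IH B plus; rewrite merge_runs_run /= => -[hacc].
  rewrite alt_nonneg_zeros //.
  case: (odd n) => /= hbg; last by split=> //; apply: IH.
  by apply: IH; case: plus hacc hbg => /= _; rewrite ?opprD !addrA.
- by move=> acc m n g B plus [].
- by move=> acc b g IH B plus; rewrite merge_runs_inl /= => -[hacc /IH].
Qed.

(* Counting entries: merging removes exactly 2 * nu entries, except for the
   entry that step (c) removes when the trailing run is odd. *)
Lemma merge_runs_size acc g : runs_wf g ->
  (size (acc :: flatten_runs g) + trail_odd (merge_runs acc g).2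
   = size (merge_runs acc g).1 + (run_nu g).*2)%N.
Proof.
move: acc g; apply: merge_runs_ind => [//|acc n _|acc n b g IH|acc m n g []//|acc b g IH].
- by rewrite /= cats0 size_nseq run_nu_inr run_nu_nil; lia.
- rewrite merge_runs_run run_nu_inr run_nu_inl => -[_ [_ wf_g]].
  have := IH b wf_g; have := IH (acc + b) wf_g; rewrite /= size_cat size_nseq.
  case: ifP => /= ? ? ?; lia.
- by rewrite merge_runs_inl run_nu_inl => -[_ /(IH b)] /=; lia.
Qed.

Lemma merge_runs_add_head acc d g :
  merge_runs (acc + d) g = (add_head d (merge_runs acc g).1, (merge_runs acc g).2).
Proof.
move: acc g; apply: merge_runs_ind => // [acc n b g IH|acc b g _].
  by rewrite !merge_runs_run; case: ifP => // _; rewrite addrAC IH.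
by rewrite !merge_runs_inl.
Qed.

End Runs.

Section Steps.
Variable R : realFieldType.
Implicit Types (y t : seq R) (g : seq (R + nat)).

Definition drop_leading_run g : seq (R + nat) :=
  if g is inr _ :: g' then g' else g.

Definition trim_right (addback : bool) (st : seq R * option nat) : seq R :=
  let s := st.1 in
  if trail_odd st.2 then
    let s0 := belast (head 0 s) (behead s) in
    if addback then (if s0 is h :: s' then (h + last 0 s) :: s' else [::]) else s0
  else s.

Lemma next_arrayE addback y : next_array addback y =
  if drop_leading_run (group_runs y) is inl a :: rest
  then trim_right addback (merge_runs a rest) else [::].
Proof.
rewrite /next_array /trim_right.
case: (group_runs y) => [|[a|n] g] //=; last case: g => [|[b|m] g] //=.
all: by case: merge_runs => s [n'|].
Qed.

(* Step (c') deletes entries at the end, keeping the partial sums. *)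
Lemma trim_right_II_alt B plus st :
  alt_nonneg B plus st.1 -> alt_nonneg B plus (trim_right false st).
Proof.
case: st => [[|h s] t] //=; rewrite /trim_right /=; case: trail_odd => // hs.
by apply: (@alt_nonneg_catl _ _ _ _ [:: last h s]); rewrite cats1 -lastI.
Qed.

Lemma trim_right_II_size st : (0 < size st.1)%N ->
  (size (trim_right false st) + trail_odd st.2 = size st.1)%N.
Proof.
case: st => [[|h s] t] //= _; rewrite /trim_right /=.
by case: trail_odd; rewrite /= ?size_belast ?addn1 ?addn0.
Qed.

Lemma trim_right_I_II st d : all (fun a => 0 <= a) st.1 -> 0 <= d ->
  exists2 d', 0 <= d' & trim_right true (add_head d st.1, st.2)
                        = add_head d' (trim_right false st).
Proof.
case: st => [[|h [|e s]] t] /= s_ge0 d_ge0; rewrite /trim_right /=.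
- by exists 0; case: trail_odd.
- by case: trail_odd; [exists 0 | exists d].
case: trail_odd; last by exists d.
exists (d + last e s); last by rewrite /= addrA.
have /allP es_ge0 : all (fun a => 0 <= a) (e :: s) by case/andP: s_ge0.
by rewrite addr_ge0 // es_ge0 // mem_last.
Qed.

Lemma merge_step_II a rest : runs_wf rest ->
  alt_nonneg 0 true (a :: flatten_runs rest) ->
  alt_nonneg 0 true (trim_right false (merge_runs a rest)) /\
  size (a :: flatten_runs rest)
  = (size (trim_right false (merge_runs a rest)) + (run_nu rest).*2)%N.
Proof.
move=> wf_rest alt_a; split; first exact/trim_right_II_alt/merge_runs_alt.
have := merge_runs_size a wf_rest.
have := trim_right_II_size (merge_runs_nonempty a rest); lia.
Qed.

Lemma merge_step_I_II a d rest : 0 <= a -> runs_wf rest -> 0 <= d ->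
  exists2 d', 0 <= d' & trim_right true (merge_runs (a + d) rest)
                        = add_head d' (trim_right false (merge_runs a rest)).
Proof.
move=> a_ge0 wf_rest d_ge0; rewrite merge_runs_add_head.
by apply: trim_right_I_II d_ge0; apply: merge_runs_nonneg.
Qed.

(* Under the invariant, a leading run of zeros has even length: otherwise
   the next (positive) entry would be subtracted from a zero partial sum. *)
Lemma leading_run_even y k g : all (fun a => 0 <= a) y ->
  alt_nonneg 0 true y -> ~~ odd (size y) -> group_runs y = inr k :: g -> ~~ odd k.
Proof.
move=> y_ge0; have := group_runs_wf y_ge0; rewrite -{2 3}(group_runsK y).
move=> + + + gy; rewrite gy; case: g {gy} => [|[b|m] g] /=.
- by move=> _ _; rewrite cats0 size_nseq.
- case=> _ [b_gt0 _]; rewrite alt_nonneg_zeros //; case: (odd k) => //= -[].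
  by rewrite sub0r oppr_ge0 leNgt b_gt0.
- by case.
Qed.

Lemma next_array_II y : all (fun a => 0 <= a) y ->
  alt_nonneg 0 true y -> ~~ odd (size y) ->
  alt_nonneg 0 true (next_array false y) /\
  size y = (size (next_array false y) + (run_nu (group_runs y)).*2)%N.
Proof.
move=> y_ge0 y_alt y_even; have lead_even := leading_run_even y_ge0 y_alt y_even.
move: lead_even (group_runs_wf y_ge0) (group_runsK y) y_alt y_even.
rewrite next_arrayE; case: (group_runs y) => [|[a|k] g] lead_even wf_g <- //=.
  by case: wf_g => _ wf_g y_alt _; apply: merge_step_II.
have k_even := lead_even k g erefl; case: g wf_g {lead_even} => [|[b|m] g] [wf_k wf_g] /=.
- by rewrite cats0 size_nseq run_nu_inr run_nu_nil; lia.
- rewrite alt_nonneg_zeros // (negbTE k_even) => y_alt _.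
  have [next_alt next_size] := merge_step_II (proj2 wf_g) y_alt; split=> //.
  by rewrite size_cat size_nseq run_nu_inr run_nu_inl; move: next_size => /=; lia.
- by case: wf_k.
Qed.

Lemma next_array_I_II y : all (fun a => 0 <= a) y ->
  exists2 d', 0 <= d' & next_array true y = add_head d' (next_array false y).
Proof.
move=> y_ge0; rewrite !next_arrayE; have := group_runs_wf y_ge0.
case: (group_runs y) => [|[a|k] g] /=; first by exists 0.
  by case=> a_gt0 wf_g; rewrite -{1}[a]addr0; apply: merge_step_I_II (ltW a_gt0) _ _.
case: g => [|[b|m] g] /= [_ wf_g]; try by exists 0.
by case: wf_g => b_gt0 wf_g; rewrite -{1}[b]addr0; apply: merge_step_I_II (ltW b_gt0) _ _.
Qed.

Lemma group_runs_nonzero a t : a != 0 -> group_runs (a :: t) = inl a :: group_runs t.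
Proof. by move=> /negbTE /= ->. Qed.

(* Filling a leading zero with d > 0: the leading run, of even length, turns
   into an interior odd run between d and the next entry b, which are
   merged; nu is unchanged since uphalf m = uphalf (m + 1) for odd m. *)
Lemma next_array_fill_zero t d : all (fun a => 0 <= a) t ->
  alt_nonneg 0 true (0 :: t) -> ~~ odd (size t).+1 -> 0 < d ->
  run_nu (group_runs (d :: t)) = run_nu (group_runs (0 :: t)) /\
  exists2 d', 0 <= d' & next_array true (d :: t) = add_head d' (next_array false (0 :: t)).
Proof.
move=> t_ge0 alt_0t even_0t d_gt0.
have zt_ge0 : all (fun a => 0 <= a) (0 :: t) by rewrite /= lexx.
have lead_even := leading_run_even zt_ge0 alt_0t even_0t.
have := group_runs_wf t_ge0; move: lead_even.
rewrite !next_arrayE (group_runs_nonzero _ (lt0r_neq0 d_gt0)) /= eqxx.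
case: (group_runs t) => [|[b|m] g] lead_even /= wf_t.
1, 2: by have := lead_even _ _ erefl.
have m_odd : odd m by have := lead_even _ _ erefl; rewrite /= negbK.
rewrite run_nu_inl !run_nu_inr; split; first lia.
case: g wf_t {lead_even} => [|[b|n] g] [wf_m wf_g].
- by exists 0; rewrite // /trim_right /= m_odd.
- rewrite m_odd addrC; case: wf_g => b_gt0 wf_g.
  exact: merge_step_I_II (ltW b_gt0) wf_g (ltW d_gt0).
- by case: wf_m.
Qed.

Lemma next_array_add_head y d : all (fun a => 0 <= a) y ->
  alt_nonneg 0 true y -> ~~ odd (size y) -> 0 <= d ->
  run_nu (group_runs (add_head d y)) = run_nu (group_runs y) /\
  exists2 d', 0 <= d' & next_array true (add_head d y) = add_head d' (next_array false y).
Proof.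
move=> y_ge0 y_alt y_even d_ge0.
have [->|d_neq0] := eqVneq d 0; first by rewrite add_head0; split=> //; apply: next_array_I_II.
have d_gt0 : 0 < d by rewrite lt_def d_neq0.
case: y y_ge0 y_alt y_even => [|c t]; first by split=> //; exists 0.
case/andP=> c_ge0 t_ge0 y_alt y_even.
have [c0|c_neq0] := eqVneq c 0.
  move: y_alt y_even; rewrite c0 add_head_cons add0r => alt_0t even_0t.
  exact: next_array_fill_zero t_ge0 alt_0t even_0t d_gt0.
have c_gt0 : 0 < c by rewrite lt_def c_neq0.
have cd_neq0 : c + d != 0 by rewrite lt0r_neq0 // ltr_wpDr // ltW.
rewrite add_head_cons !next_arrayE !group_runs_nonzero //; split=> //.
exact: merge_step_I_II (ltW c_gt0) (group_runs_wf t_ge0) d_ge0.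
Qed.

End Steps.

Section Minimum.
Variable R : realFieldType.
Implicit Types (x : seq R).

Lemma foldr_min_le (z : R) x a : a \in x -> foldr Num.min z x <= a.
Proof.
elim: x => //= b x IH; rewrite in_cons ge_min => /orP[/eqP->|/IH->].
  by rewrite lexx.
by rewrite orbT.
Qed.

Lemma foldr_min_mem (z : R) x : foldr Num.min z x \in z :: x.
Proof.
elim: x => [|b x IH] /=; first by rewrite mem_head.
rewrite /Num.min; case: ifP => _; first by rewrite !in_cons eqxx orbT.
by move: IH; rewrite !in_cons => /orP[->|->]; rewrite ?orbT.
Qed.

Lemma seqmin_le x a : a \in x -> seqmin x <= a.
Proof. exact: foldr_min_le. Qed.

Lemma seqmin_mem x : x != [::] -> seqmin x \in x.
Proof.
case: x => // c x _; have := foldr_min_mem c (c :: x).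
by rewrite /seqmin /= !in_cons orbA orbb.
Qed.

Lemma seqmin_eq x m : m \in x -> (forall a, a \in x -> m <= a) -> seqmin x = m.
Proof.
move=> m_in m_le; apply/le_anti; rewrite seqmin_le //=.
by apply: m_le; apply: seqmin_mem; apply/eqP => x0; rewrite x0 in m_in.
Qed.

(* Under the highest weight condition x_1 >= x_2, so increasing x_1 does not
   change the minimum. *)
Lemma seqmin_add_head x d : pair_nonneg 0 x -> ~~ odd (size x) -> 0 <= d ->
  seqmin (add_head d x) = seqmin x.
Proof.
case: x => [|c [|b x]] //= [bc _] _ d_ge0; rewrite add0r subr_ge0 in bc.
set xs := [:: c, b & x]; have min_le a : a \in xs -> seqmin xs <= a by apply: seqmin_le.
have min_in : seqmin xs \in xs by apply: seqmin_mem.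
apply: seqmin_eq => [|a].
  move: min_in; rewrite !in_cons => /orP[/eqP min_c|->]; last by rewrite orbT.
  have min_b : seqmin xs = b by apply/le_anti; rewrite min_le ?min_c ?inE ?eqxx ?orbT.
  by rewrite min_b eqxx orbT.
rewrite in_cons => /orP[/eqP->|a_in]; last by rewrite min_le // in_cons a_in orbT.
by rewrite (le_trans (min_le c (mem_head _ _))) // lerDl.
Qed.

End Minimum.

Section Rounds.
Variable R : realFieldType.
Implicit Types (x : seq R).

(* The array y^(i) = x^(i) - mu^(i) and the number nu^(i) of one round. *)
Definition shift_min x : seq R := [seq a - seqmin x | a <- x].
Definition nu_of x : nat := run_nu (group_runs (shift_min x)).

Lemma shift_min_ge0 x : all (fun a => 0 <= a) (shift_min x).
Proof. by apply/allP => _ /mapP[a a_in ->]; rewrite subr_ge0 seqmin_le. Qed.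

Lemma shift_min_alt x : pair_nonneg 0 x -> alt_nonneg 0 true (shift_min x).
Proof.
by move=> x_hw; apply: pair_nonneg_alt (lexx 0) (shift_min_ge0 x) _; apply/pair_nonneg_shift.
Qed.

Lemma round_add_head x d : pair_nonneg 0 x -> ~~ odd (size x) -> 0 <= d ->
  [/\ seqmin (add_head d x) = seqmin x, nu_of (add_head d x) = nu_of x &
      exists2 d', 0 <= d' & next_array true (shift_min (add_head d x))
                            = add_head d' (next_array false (shift_min x))].
Proof.
move=> x_hw x_even d_ge0; have mu_eq := seqmin_add_head x_hw x_even d_ge0.
have shift_eq : shift_min (add_head d x) = add_head d (shift_min x).
  by rewrite /shift_min mu_eq; case: (x) => //= c s; rewrite addrAC.
have y_even : ~~ odd (size (shift_min x)) by rewrite size_map.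
have [nu_eq next_eq] :=
  next_array_add_head (shift_min_ge0 x) (shift_min_alt x_hw) y_even d_ge0.
by split; rewrite // /nu_of shift_eq.
Qed.

Lemma round_II x : pair_nonneg 0 x -> ~~ odd (size x) -> x != [::] ->
  [/\ pair_nonneg 0 (next_array false (shift_min x)),
      size x = (size (next_array false (shift_min x)) + (nu_of x).*2)%N &
      (0 < nu_of x)%N].
Proof.
move=> x_hw x_even x_nonempty.
have y_even : ~~ odd (size (shift_min x)) by rewrite size_map.
have [next_alt next_size] := next_array_II (shift_min_ge0 x) (shift_min_alt x_hw) y_even.
split; [exact: alt_pair_nonneg | by rewrite -next_size size_map |].
by apply/run_nu_gt0/mapP; exists (seqmin x); rewrite ?seqmin_mem ?subrr.
Qed.

Lemma algorithms_agree N x d : size x = (2 * N)%N -> pair_nonneg 0 x -> 0 <= d ->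
  exists L, alg_run true N (add_head d x) L /\ alg_run false N x L.
Proof.
elim/ltn_ind: N x d => N IH x d x_size x_hw d_ge0.
have x_even : ~~ odd (size x) by rewrite x_size oddM.
have [mu_eq nu_eq [d' d'_ge0 next_eq]] := round_add_head x_hw x_even d_ge0.
have [stop|cont] := eqVneq (N - nu_of x)%N 0.
  exists [:: (seqmin x, nu_of x)]; split; last exact: alg_stop.
  have stopI : (N - nu_of (add_head d x))%N = 0 by rewrite nu_eq.
  by rewrite -mu_eq -nu_eq; apply: alg_stop stopI.
have x_nonempty : x != [::] by apply: contra_neq cont => x0; rewrite x0 /= in x_size; lia.
have [next_hw next_size nu_gt0] := round_II x_hw x_even x_nonempty.
have lt_N : (N - nu_of x < N)%N by lia.
have size_next : size (next_array false (shift_min x)) = (2 * (N - nu_of x))%N.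
  by move: next_size; rewrite x_size; lia.
have [L [runI runII]] := IH _ lt_N _ _ size_next next_hw d'_ge0.
have contII : (N - nu_of x)%N <> 0 by apply/eqP.
have contI : (N - nu_of (add_head d x))%N <> 0 by rewrite nu_eq.
exists ((seqmin x, nu_of x) :: L); split; last exact: alg_continue contII runII.
rewrite -mu_eq -nu_eq; apply: alg_continue contI _.
by rewrite -/(shift_min _) -/(nu_of _) nu_eq next_eq.
Qed.

End Rounds.

Unset Implicit Arguments.

Theorem mainTheorem8 (R : realFieldType) (N : nat) (x : seq R) :
  (1 <= N)%N ->
  size x = (2 * N)%N ->
  all (fun a => 0 < a) x ->
  highest_weight x ->
  exists L : seq (R * nat),
    algorithm_I_run N x L /\ algorithm_II_run N x L.
Proof.
move=> _ x_size _ x_hw.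
have x_pair : pair_nonneg 0 x.
  by apply: highest_weight_pair_nonneg => k /x_hw; rewrite add0r.
have [L [runI runII]] := algorithms_agree x_size x_pair (lexx 0).
by exists L; rewrite add_head0 in runI.
Qed.
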